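(* Let $n$ be an odd positive integer and let $\mathcal{B}$ be a balanced bipartite graph on $2n$ vertices with parts $V_1$ and $V_2$ such that $\delta(\mathcal{B})\geq\frac{n}{2}+1$. Let $S\subseteq V(\mathcal{B})$ with $|S|=n+1$. Then $\mathcal{B}[S]$ is a forest if and only if $\min\{|S\cap V_1|,|S\cap V_2|\}=1$.
   Context: All graphs are finite and simple. A balanced bipartite graph on $2n$ vertices is a bipartite graph with a given bipartition $(V_1,V_2)$ where $|V_1|=|V_2|=n$. $\delta(G)$ denotes the minimum degree of $G$, and $G[S]$ the subgraph induced by $S\subseteq V(G)$. *)

From mathcomp Require Import all_boot.
Set Implicit Arguments. Unset Strict Implicit. Unset Printing Implicit Defensive.

Definition simple_graph (T : finType) (e : rel T) : Prop :=
  symmetric e /\ irreflexive e.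

Definition deg (T : finType) (e : rel T) (v : T) : nat := #|[set u | e v u]|.

Definition balanced_bipartite (T : finType) (e : rel T) (V1 V2 : {set T}) (n : nat) : Prop :=
  [/\ simple_graph e,
      V1 :&: V2 = set0 /\ V1 :|: V2 = [set: T],
      #|V1| = n, #|V2| = n &
      (forall u v, e u v -> (u \in V1 /\ v \in V2) \/ (u \in V2 /\ v \in V1))].

(* minimum degree delta(G) >= n/2 + 1, stated without division: 2 deg >= n + 2 *)
Definition min_degree_ge_half_plus_one (T : finType) (e : rel T) (n : nat) : Prop :=
  forall v : T, n + 2 <= 2 * deg e v.

Definition has_cycle_in (T : finType) (e : rel T) (S : {set T}) : Prop :=
  exists c : seq T, [/\ 2 < size c, {subset c <= S} & ucycle e c].

Definition induced_forest (T : finType) (e : rel T) (S : {set T}) : Prop :=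
  ~ has_cycle_in e S.

From mathcomp Require Import all_boot.
From mathcomp Require Import zify.
Set Implicit Arguments. Unset Strict Implicit. Unset Printing Implicit Defensive.

(* A cycle of a bipartite graph meets both sides at least twice, so if one side
   of S has a single vertex then B[S] is a forest.  Conversely, suppose both
   sides have at least two vertices and let W be the side with a <= (n+1)/2
   vertices in S.  Since n is odd, every vertex has degree at least (n+3)/2,
   and at most n - (n+1-a) of its neighbours lie outside S, so each vertex of
   S :&: W has at least (n+5)/2 - a neighbours in S.  Hence B[S] has at least
   a(n+5-2a)/2 >= n+1 edges, which is too many for a forest on n+1 vertices. *)

Section InducedSubgraphs.
Variables (T : finType) (e : rel T).
Hypotheses (e_sym : symmetric e) (e_irr : irreflexive e).

Definition bipartite_wrt (W : {set T}) :=
  forall u v, e u v -> (u \in W) = (v \notin W).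

Definition nbrs_in (S : {set T}) (u : T) := [set v in S | e u v].

(* Each edge of a bipartite B[S] is counted once, from its endpoint in W. *)
Definition edges_from (W S : {set T}) := \sum_(u in S :&: W) #|nbrs_in S u|.

Lemma has_cycle_side_gt1 (W S : {set T}) :
  bipartite_wrt W -> has_cycle_in e S -> 1 < #|S :&: W|.
Proof.
move=> bip [c [c_size cS /andP [c_cyc c_uniq]]].
have [v vc vW] : exists2 v, v \in c & v \notin W.
  case: c c_size c_cyc {cS c_uniq} => [|c0 [|c1 r]] //= _ /andP [e01 _].
  have [c0W|] := boolP (c0 \in W); last by exists c0; rewrite ?inE ?eqxx.
  by exists c1; rewrite ?inE ?eqxx ?orbT // -(bip _ _ e01).
have [i s c_rot] := rot_to vc.
have [] : [/\ cycle e (v :: s), uniq (v :: s), 2 < size (v :: s)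
            & {subset v :: s <= S}].
  by rewrite -c_rot rot_cycle rot_uniq size_rot; split=> // x; rewrite mem_rot => /cS.
case: s {c_rot} => [|a [|b s]] //= /andP [eva] /andP [_]; rewrite rcons_path => /andP [_ elv].
move=> /and3P [_ a_bs _] _ vasS.
set l := last b s in elv.
have l_bs : l \in b :: s by apply: mem_last.
have aW : a \in W by rewrite -(negbK (a \in W)) -(bip _ _ eva).
have lW : l \in W by rewrite (bip _ _ elv).
have al : a != l by apply: contraNneq a_bs => ->.
have aS : a \in S by apply: vasS; rewrite !inE eqxx orbT.
have lS : l \in S by apply/vasS/mem_behead/mem_behead.
have al_sub : [set a; l] \subset S :&: W.
  by apply/subsetP => x; rewrite !inE => /orP [] /eqP ->; rewrite ?aS ?aW ?lS ?lW.
by have := subset_leq_card al_sub; rewrite cards2 al.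
Qed.

Lemma has_cycle_chord (S : {set T}) x h p y :
  path e x (h :: p) -> uniq [:: x, h & p] -> {subset [:: x, h & p] <= S} ->
  y \in p -> e x y -> has_cycle_in e S.
Proof.
move=> xhp xhp_uniq xhpS yp exy; set j := index y p.
have take_y : take j.+1 p = rcons (take j p) y.
  by rewrite (take_nth y) ?index_mem // nth_index.
exists [:: x, h & take j.+1 p]; split.
- by rewrite /= take_y size_rcons.
- move=> z; rewrite !inE => /orP [/eqP ->|/orP [/eqP ->|/mem_take zp]];
    by apply: xhpS; rewrite !inE ?eqxx ?zp ?orbT.
- rewrite /ucycle /cycle rcons_path /= take_y last_rcons (e_sym y x) exy andbT -take_y.
  have := take_path j.+2 xhp => /= ->.
  move: xhp_uniq => /= /and3P [x_hp h_p p_uniq].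
  rewrite take_uniq // andbT inE negb_or.
  move: x_hp; rewrite inE negb_or => /andP [-> x_p].
  by rewrite (contra (@mem_take _ _ _ _) x_p) (contra (@mem_take _ _ _ _) h_p).
Qed.

(* Extend a simple path in S from its free end until the end vertex has at most
   one neighbour in S; a neighbour already on the path would close a cycle. *)
Lemma forest_leaf (S : {set T}) :
  induced_forest e S -> S != set0 -> exists2 v, v \in S & #|nbrs_in S v| <= 1.
Proof.
move=> S_forest /set0Pn [x0 x0S].
suff leaf_from k x p : #|T| - size p <= k -> path e x p -> uniq (x :: p) ->
    {subset x :: p <= S} -> exists2 v, v \in S & #|nbrs_in S v| <= 1.
  by apply: (leaf_from #|T| x0 [::]) => //= [|y]; rewrite ?subn0 // inE => /eqP ->.
elim: k x p => [|k IHk] x p p_size xp xp_uniq xpS.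
  have : size (x :: p) <= #|T| by rewrite -(card_uniqP xp_uniq) max_card.
  by move: p_size => /=; lia.
have [x_leaf|x_nbrs] := leqP #|nbrs_in S x| 1; first by exists x; rewrite ?xpS ?inE ?eqxx.
have [y] : exists2 y, y \in nbrs_in S x & y != head x p.
  apply/exists_inP; rewrite -(negbK [exists _ in _, _]) negb_exists_in.
  apply: contraTN x_nbrs => /forall_inP head_only; rewrite -leqNgt.
  rewrite -(cards1 (head x p)); apply/subset_leq_card/subsetP => z zN.
  by rewrite inE; move/negPn: (head_only z zN).
rewrite inE => /andP [yS exy] y_head.
have [y_xp|y_xp] := boolP (y \in x :: p); last first.
  apply: (IHk y (x :: p)); first by rewrite subnS; case: (#|T| - size p) p_size.
  - by rewrite /= e_sym exy xp.
  - by rewrite cons_uniq y_xp xp_uniq.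
  - by move=> z; rewrite inE => /orP [/eqP ->|/xpS].
have y_x : y != x by apply: contraTneq exy => ->; rewrite e_irr.
case: p y_head y_xp xp xp_uniq xpS {p_size} => [|h p] /= y_h; rewrite !inE.
  by rewrite (negbTE y_x).
rewrite (negbTE y_x) (negbTE y_h) /= => y_p xp xp_uniq xpS.
by case: S_forest; apply: (has_cycle_chord xp xp_uniq xpS y_p exy).
Qed.

Lemma card_nbrs_in_setD1 (S : {set T}) u v : v \in S ->
  #|nbrs_in S u| = e u v + #|nbrs_in (S :\ v) u|.
Proof.
move=> vS; rewrite (cardsD1 v) !inE vS /=; congr (_ + _).
by apply: eq_card => w; rewrite !inE andbA.
Qed.

Lemma edges_from_setD1 (W S : {set T}) v : bipartite_wrt W -> v \in S ->
  edges_from W S <= edges_from W (S :\ v) + #|nbrs_in S v|.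
Proof.
move=> bip vS; rewrite /edges_from.
rewrite (eq_bigr _ (fun u _ => card_nbrs_in_setD1 u vS)) big_split /=.
have [vW|vW] := boolP (v \in W).
- have -> : \sum_(u in S :&: W) e u v = 0.
    apply: big1 => u; rewrite inE => /andP [_ uW].
    by apply/eqP; rewrite eqb0; apply/negP => /bip; rewrite uW vW.
  rewrite (bigD1 v) /=; last by rewrite inE vS vW.
  rewrite add0n addnC leq_add ?subset_leq_card //; last first.
    by apply/subsetP => w; rewrite !inE => /andP [/andP [_ ->] ->].
  rewrite (eq_bigl (mem ((S :\ v) :&: W))) // => u.
  by rewrite !inE; case: (u != v); rewrite ?andbT ?andbF.
- rewrite addnC leq_add //.
    rewrite (eq_bigl (mem ((S :\ v) :&: W))) // => u.
    by rewrite !inE; case: eqP => [->|]; rewrite ?(negbTE vW) ?andbF.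
  rewrite -sum1_card big_mkcond [X in _ <= X]big_mkcond /=.
  apply: leq_sum => u _; rewrite !inE e_sym.
  by case: (u \in S); case: (u \in W); case: (e v u).
Qed.

Lemma forest_edges_from (W S : {set T}) : bipartite_wrt W ->
  induced_forest e S -> edges_from W S <= #|S|.-1.
Proof.
move=> bip; move: {2}#|S| (leqnn #|S|) => k; elim: k S => [|k IHk] S S_k S_forest.
  by move: S_k; rewrite leqn0 cards_eq0 => /eqP ->; rewrite /edges_from set0I big_set0.
have [->|S_ne0] := eqVneq S set0; first by rewrite /edges_from set0I big_set0.
have [v vS v_leaf] := forest_leaf S_forest S_ne0.
have S'_forest : induced_forest e (S :\ v).
  by move=> [c [c_size cS' c_cyc]]; apply: S_forest; exists c; split=> // z /cS'/setD1P [].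
have v_nbrs : #|nbrs_in S v| <= #|S :\ v|.
  apply/subset_leq_card/subsetP => u; rewrite !inE => /andP [-> evu].
  by rewrite andbT; apply: contraTneq evu => ->; rewrite e_irr.
have S_card : #|S| = #|S :\ v|.+1 by rewrite (cardsD1 v) vS.
have := edges_from_setD1 bip vS; have := IHk (S :\ v) _ S'_forest.
by move: S_k v_leaf v_nbrs; rewrite S_card; lia.
Qed.

End InducedSubgraphs.

Lemma deg_le_nbrs_in (T : finType) (e : rel T) (W S : {set T}) u :
  (forall v, e u v -> v \in W) -> deg e u <= #|nbrs_in e S u| + #|W :\: S|.
Proof.
move=> uW; rewrite /deg -(cardsID S) leq_add //.
  by apply/subset_leq_card/subsetP => v; rewrite !inE andbC.
by apply/subset_leq_card/subsetP => v; rewrite !inE => /andP [-> /uW].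
Qed.

Section BalancedBipartite.
Variables (T : finType) (e : rel T) (V1 V2 : {set T}) (n : nat).
Hypothesis B : balanced_bipartite e V1 V2 n.

Lemma balanced_bipartite_sym : balanced_bipartite e V2 V1 n.
Proof.
case: B => sg [V12_0 V12_T] V1_n V2_n e_V12; split=> //.
- by rewrite setIC setUC.
- by move=> u v /e_V12 [] [uV vV]; [right | left].
Qed.

Lemma balanced_bipartite_mem u : (u \in V1) = (u \notin V2).
Proof.
case: B => _ [V12_0 V12_T] _ _ _.
have := in_set0 u; have := in_setT u.
by rewrite -V12_0 -V12_T !inE; case: (u \in V1); case: (u \in V2).
Qed.

Lemma balanced_bipartite_edge u v : e u v -> u \in V1 -> v \in V2.
Proof.
by case: B => _ _ _ _ e_V12 /e_V12 [[]|[]] // uV2 _; rewrite balanced_bipartite_mem uV2.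
Qed.

Lemma balanced_bipartite_wrt : bipartite_wrt e V1.
Proof.
case: B => _ _ _ _ e_V12 u v /e_V12 [] [uV vV].
- by rewrite uV balanced_bipartite_mem vV.
- by rewrite vV balanced_bipartite_mem uV.
Qed.

Lemma card_setI_parts (S : {set T}) : #|S :&: V1| + #|S :&: V2| = #|S|.
Proof.
rewrite -[RHS](cardsID V1) [S :\: V1]setDE; congr (_ + _); apply: eq_card => u.
by rewrite !inE balanced_bipartite_mem negbK.
Qed.

Lemma edges_from_dense (S : {set T}) : odd n -> min_degree_ge_half_plus_one e n ->
  #|S| = n.+1 -> 2 <= #|S :&: V1| -> 2 * #|S :&: V1| <= n.+1 ->
  n.+1 <= edges_from e V1 S.
Proof.
move=> n_odd deg_ge S_card a_ge2 a_le; set a := #|S :&: V1| in a_ge2 a_le *.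
have [k n_2k1] : exists k, n = k.*2.+1.
  by exists n./2; rewrite -[LHS]odd_double_half n_odd add1n.
have V2S_card : #|V2 :\: S| = a.-1.
  have := card_setI_parts S; have := cardsID S V2.
  by rewrite [V2 :&: S]setIC S_card; case: B => _ _ _ -> _; lia.
have nbrs_ge u : u \in S :&: V1 -> n + 5 <= 2 * #|nbrs_in e S u| + 2 * a.
  rewrite inE => /andP [_ uV1].
  have := deg_le_nbrs_in S (fun v euv => balanced_bipartite_edge euv uV1).
  by have := deg_ge u; rewrite V2S_card n_2k1; lia.
have : a * (n + 5 - 2 * a) <= 2 * edges_from e V1 S.
  rewrite /edges_from big_distrr /= /a -sum_nat_const.
  by apply: leq_sum => u /nbrs_ge; lia.
(* a (n + 5 - 2a) - 2 (n + 1) = (a - 2)(n + 1 - 2a) *)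
nia.
Qed.

End BalancedBipartite.

Lemma forest_small_side (T : finType) (e : rel T) (V1 V2 S : {set T}) (n : nat) :
  odd n -> balanced_bipartite e V1 V2 n -> min_degree_ge_half_plus_one e n ->
  #|S| = n.+1 -> induced_forest e S -> minn #|S :&: V1| #|S :&: V2| <= 1.
Proof.
move=> n_odd B deg_ge S_card S_forest.
wlog a_le : V1 V2 B / 2 * #|S :&: V1| <= n.+1.
  move=> IH; have := card_setI_parts B S.
  have [/IH -> //|a_gt] := leqP (2 * #|S :&: V1|) n.+1.
  by rewrite minnC => parts; apply: IH (balanced_bipartite_sym B) _; lia.
rewrite leqNgt; apply/negP => both_ge2.
have [[e_sym e_irr] _ _ _ _] := B.
have := forest_edges_from e_sym e_irr (balanced_bipartite_wrt B) S_forest.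
have := edges_from_dense B n_odd deg_ge S_card _ a_le.
by rewrite S_card; move: both_ge2; rewrite leq_min; lia.
Qed.

Theorem corollary2p5 (T : finType) (e : rel T) (V1 V2 : {set T}) (n : nat)
  (hodd : odd n)
  (hB : balanced_bipartite e V1 V2 n)
  (hdeg : min_degree_ge_half_plus_one e n)
  (S : {set T}) (hS : #|S| = n.+1) :
  induced_forest e S <-> minn #|S :&: V1| #|S :&: V2| = 1.
Proof.
have parts := card_setI_parts hB S.
have [_ _ V1_n V2_n _] := hB.
have a_le : #|S :&: V1| <= n by rewrite -V1_n subset_leq_card ?subsetIr.
have b_le : #|S :&: V2| <= n by rewrite -V2_n subset_leq_card ?subsetIr.
split=> [S_forest | min1 S_cycle].
- by have := forest_small_side hodd hB hdeg hS S_forest; lia.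
- have := has_cycle_side_gt1 (balanced_bipartite_wrt hB) S_cycle.
  have := has_cycle_side_gt1 (balanced_bipartite_wrt (balanced_bipartite_sym hB)) S_cycle.
  lia.
Qed.
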